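(* Fix a positive integer $k$. For a power $q$ of an odd prime with $q\equiv1\pmod4$, $k\mid q-1$ and $e=(q-1)/k$ even, and a primitive root $\alpha$ of $\mathbb{F}_q$, put $\beta=\alpha^{e}$ and let $\chi$ be the quadratic residue character of $\mathbb{F}_q$. (i) If $k$ is odd, there is a subset $S_k\subseteq\{\pm1\}^{(k-1)/2}$, depending only on $k$, such that for all such $q$ and $\alpha$: $(q,k)$ gives a $3$-design if and only if $(\chi(1-\beta),\chi(1-\beta^2),\dots,\chi(1-\beta^{(k-1)/2}))\in S_k$. (ii) If $k\equiv2\pmod4$, there is a subset $S_k\subseteq\{\pm1\}^{(k+2)/4}$, depending only on $k$, such that for all such $q$ and $\alpha$: $(q,k)$ gives a $3$-design if and only if $(\chi(1-\beta^2),\chi(1-\beta^4),\dots,\chi(1-\beta^{k/2-1}),\chi(2))\in S_k$.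
   Context: The group $\mathrm{PSL}(2,q)$ acts on $\mathrm{PG}(1,q)=\mathbb{F}_q\cup\{\infty\}$ by linear fractional transformations $z\mapsto (az+b)/(cz+d)$ with $ad-bc$ a nonzero square in $\mathbb{F}_q$. ''$(q,k)$ gives a $3$-design'' means that the $\mathrm{PSL}(2,q)$-orbit of $B=\langle\beta\rangle$, the subgroup of order $k$ of $\mathbb{F}_q^\times$, is the block set of a $3$-$(q+1,k,\lambda)$ design for some positive integer $\lambda$. $\chi(a)=1$ if $a$ is a nonzero square in $\mathbb{F}_q$ and $\chi(a)=-1$ otherwise. *)

From mathcomp Require Import all_boot all_order all_algebra all_field.
Set Implicit Arguments. Unset Strict Implicit. Unset Printing Implicit Defensive.
Import GRing.Theory.
Local Open Scope ring_scope.

Section Defs.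
Variable F : finFieldType.

Definition nzsq (a : F) : bool := (a != 0) && [exists y : F, y ^+ 2 == a].

Definition chi (a : F) : int := if nzsq a then 1%R else (-1)%R.

(* PG(1,F) = F ∪ {∞}, with None = ∞ *)
Definition mobius (a b c d : F) (z : option F) : option F :=
  match z with
  | None => if c == 0 then None else Some (a / c)
  | Some x => if c * x + d == 0 then None else Some ((a * x + b) / (c * x + d))
  end.

(* elements of PSL(2,F): z |-> (az+b)/(cz+d) with ad - bc a nonzero square *)
Definition psl_coeff (m : F * F * F * F) : bool :=
  let: (a, b, c, d) := m in nzsq (a * d - b * c).

Definition psl_map (m : F * F * F * F) : option F -> option F :=
  let: (a, b, c, d) := m in mobius a b c d.

Definition psl_orbit (B : {set option F}) : {set {set option F}} :=
  [set X : {set option F} | [exists m, psl_coeff m && (X == psl_map m @: B)]].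

(* the subgroup of order k of F^x, embedded in PG(1,F) (for k | q-1) *)
Definition subgroup_k (k : nat) : {set option F} :=
  [set Some x | x in [set x : F | x ^+ k == 1]].

Definition gives_3design (k : nat) : Prop :=
  exists lam : nat, (0 < lam)%N /\
    forall T : {set option F}, #|T| = 3%N ->
      #|[set X in psl_orbit (subgroup_k k) | T \subset X]| = lam.
End Defs.

Definition pm1_seqs (m : nat) (S : seq int -> Prop) : Prop :=
  forall s, S s -> size s = m /\ all (fun x => (x == 1) || (x == -1)) s.

From mathcomp Require Import all_boot all_order all_algebra all_field.
From mathcomp Require Import cyclic ring zify.
Set Implicit Arguments. Unset Strict Implicit. Unset Printing Implicit Defensive.
Import GRing.Theory.
Local Open Scope ring_scope.

(* PSL(2,q) has exactly two orbits on ordered triples of distinct points of PG(1,q), told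
   apart by the quadratic character of the product of the three brackets of the triple, and
   a non-square dilation exchanges them.  Counting pairs (triple, block) in two ways shows
   that the orbit of a set B is a 3-design iff B contains as many ordered triples of one
   class as of the other, and at least one.  For B = <beta> with beta a square, the class of
   (beta^a, beta^b, beta^c) is a product of values f(j) = chi(1 - beta^j), 0 < j < k, so the
   design property is a fixed condition (depending only on k) on the function f.  As -1 is
   a square, f(k - j) = f(j); when k = 2 mod 4 moreover f(k/2) = chi 2 and
   f(j) = f(2j) f(j + k/2) for odd j <> k/2, because 1 - beta^(2j) = (1 - beta^j)(1 + beta^j) and
   beta^(k/2) = -1.  Hence f is determined by the listed values. *)

(** * Squares and the quadratic character *)

Section Squares.
Variable F : finFieldType.

Lemma nzsq_neq0 (x : F) : nzsq x -> x != 0.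
Proof. by case/andP. Qed.

Lemma nzsq_sqr (x : F) : x != 0 -> nzsq (x ^+ 2).
Proof. by move=> xnz; rewrite /nzsq expf_eq0 /= xnz; apply/existsP; exists x. Qed.

Lemma nzsqM (x y : F) : nzsq x -> nzsq y -> nzsq (x * y).
Proof.
case/andP=> xnz /existsP [s /eqP hs]; case/andP=> ynz /existsP [t /eqP ht].
rewrite /nzsq mulf_eq0 negb_or xnz ynz; apply/existsP; exists (s * t).
by rewrite exprMn hs ht.
Qed.

Lemma nzsq1 : nzsq (1 : F).
Proof. by rewrite -(expr1n _ 2) nzsq_sqr ?oner_eq0. Qed.

Lemma nzsqX (x : F) i : nzsq x -> nzsq (x ^+ i).
Proof. by move=> hx; elim: i => [|i IHi]; rewrite ?nzsq1 // exprS nzsqM. Qed.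

End Squares.

Lemma prim_expr_half (R : idomainType) (n : nat) (z : R) :
  (0 < n)%N -> (n.*2).-primitive_root z -> z ^+ n = -1.
Proof.
move=> n_gt0 prim; have /eqP := prim_expr_order prim.
rewrite -muln2 exprM sqrf_eq1 => /orP [|/eqP //].
by rewrite -(expr0 z) (eq_prim_root_expr prim) mod0n modn_small; lia.
Qed.

(** * The projective line *)

Section ProjectiveLine.
Variable F : finFieldType.
Implicit Types (P Q : option F) (u : F * F) (m n : F * F * F * F).

Definition hcoord P : F * F := if P is Some x then (x, 1) else (1, 0).
Definition hpoint u : option F := if u.2 == 0 then None else Some (u.1 / u.2).

Definition mact m u : F * F :=
  let: (a, b, c, d) := m in (a * u.1 + b * u.2, c * u.1 + d * u.2).
Definition mdet m : F := let: (a, b, c, d) := m in a * d - b * c.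
Definition mmul m n : F * F * F * F :=
  let: (a, b, c, d) := m in let: (a', b', c', d') := n in
  (a * a' + b * c', a * b' + b * d', c * a' + d * c', c * b' + d * d').
Definition madj m : F * F * F * F := let: (a, b, c, d) := m in (d, - b, - c, a).

Definition bracket P Q : F := (hcoord P).1 * (hcoord Q).2 - (hcoord P).2 * (hcoord Q).1.

Definition hnorm u : F := if u.2 == 0 then u.1^-1 else u.2^-1.

Lemma psl_mapE m P : psl_map m P = hpoint (mact m (hcoord P)).
Proof.
by case: m => [[[a b] c] d]; case: P => [x|] /=; rewrite /hpoint /= !mulr1 ?mulr0 ?addr0.
Qed.

Lemma psl_coeffE m : psl_coeff m = nzsq (mdet m).
Proof. by case: m => [[[a b] c] d]. Qed.

Lemma hcoord_neq0 P : hcoord P != (0, 0).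
Proof. by case: P => [x|] /=; rewrite xpair_eqE ?oner_eq0 ?andbF. Qed.

Lemma hcoordK : cancel hcoord hpoint.
Proof. by case=> [x|] //=; rewrite /hpoint /= ?oner_eq0 ?divr1 ?eqxx. Qed.

Lemma hpointZ (l : F) u : l != 0 -> hpoint (l * u.1, l * u.2) = hpoint u.
Proof.
move=> lnz; rewrite /hpoint /= mulf_eq0 (negbTE lnz) /=.
by case: ifP => // _; rewrite invfM mulrACA divff // mul1r.
Qed.

Lemma hcoord_hpoint u : u != (0, 0) ->
  hnorm u != 0 /\ hcoord (hpoint u) = (hnorm u * u.1, hnorm u * u.2).
Proof.
case: u => u1 u2; rewrite /hpoint /hnorm /= xpair_eqE negb_and.
have [->|u2nz] := eqVneq u2 0 => /= [|_]; last by rewrite invr_eq0 u2nz mulVf // mulrC.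
by rewrite orbF => u1nz; rewrite invr_eq0 u1nz mulr0 mulVf.
Qed.

Lemma mact_neq0 m u : mdet m != 0 -> u != (0, 0) -> mact m u != (0, 0).
Proof.
case: m => [[[a b] c] d]; case: u => u1 u2 /= hd.
apply: contra => /eqP [h1 h2]; rewrite xpair_eqE.
have e1 : (a * d - b * c) * u1 = d * (a * u1 + b * u2) - b * (c * u1 + d * u2) by ring.
have e2 : (a * d - b * c) * u2 = a * (c * u1 + d * u2) - c * (a * u1 + b * u2) by ring.
rewrite h1 h2 !mulr0 subr0 in e1 e2.
move/eqP: e1; move/eqP: e2; rewrite !mulf_eq0 (negbTE hd) /=.
by move=> -> ->.
Qed.

Lemma mactZ m l u : mact m (l * u.1, l * u.2) = (l * (mact m u).1, l * (mact m u).2).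
Proof. case: m => [[[a b] c] d] /=; congr pair; ring. Qed.

Lemma mact_mul m n u : mact (mmul m n) u = mact m (mact n u).
Proof. case: m => [[[a b] c] d]; case: n => [[[a' b'] c'] d'] /=; congr pair; ring. Qed.

Lemma mdet_mul m n : mdet (mmul m n) = mdet m * mdet n.
Proof. case: m => [[[a b] c] d]; case: n => [[[a' b'] c'] d'] /=; ring. Qed.

Lemma mdet_adj m : mdet (madj m) = mdet m.
Proof. case: m => [[[a b] c] d] /=; ring. Qed.

Lemma mact_adjK m u : mact (madj m) (mact m u) = (mdet m * u.1, mdet m * u.2).
Proof. case: m => [[[a b] c] d] /=; congr pair; ring. Qed.

Lemma psl_map_mul m n P : mdet n != 0 -> psl_map m (psl_map n P) = psl_map (mmul m n) P.
Proof.
move=> hn; rewrite !psl_mapE mact_mul.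
have [lnz ->] := hcoord_hpoint (mact_neq0 hn (hcoord_neq0 P)).
by rewrite mactZ hpointZ.
Qed.

Lemma psl_map_adjK m : mdet m != 0 -> cancel (psl_map m) (psl_map (madj m)).
Proof.
by move=> hm P; rewrite psl_map_mul // psl_mapE mact_mul mact_adjK hpointZ ?hcoordK.
Qed.

Lemma psl_map_inj m : mdet m != 0 -> injective (psl_map m).
Proof. by move/psl_map_adjK/can_inj. Qed.

Definition psl_scale m P : F := hnorm (mact m (hcoord P)).

Lemma psl_scale_neq0 m P : mdet m != 0 -> psl_scale m P != 0.
Proof. by move=> hm; have [] := hcoord_hpoint (mact_neq0 hm (hcoord_neq0 P)). Qed.

Lemma bracket_map m P Q : mdet m != 0 ->
  bracket (psl_map m P) (psl_map m Q) = psl_scale m P * psl_scale m Q * mdet m * bracket P Q.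
Proof.
move=> hm; rewrite /bracket !psl_mapE /psl_scale.
have [_ ->] := hcoord_hpoint (mact_neq0 hm (hcoord_neq0 P)).
have [_ ->] := hcoord_hpoint (mact_neq0 hm (hcoord_neq0 Q)).
by case: m hm => [[[a b] c] d] /= _; ring.
Qed.

Lemma bracket_eq0 P Q : (bracket P Q == 0) = (P == Q).
Proof.
case: P => [x|]; case: Q => [y|];
  rewrite /bracket /= ?mulr1 ?mul1r ?mulr0 ?mul0r ?subr0 ?sub0r ?oppr_eq0 ?oner_eq0 //.
  by rewrite subr_eq0.
by rewrite eqxx.
Qed.

Lemma bracketC P Q : bracket Q P = - bracket P Q.
Proof. rewrite /bracket; ring. Qed.

End ProjectiveLine.

Section QuadraticCharacter.
Variable F : finFieldType.

(* [card_finNzRing_gt1], restated so that [lia] recognises [#|F|] as the same atom. *)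
Lemma card_finField_gt1 : (1 < #|F|)%N.
Proof. exact: card_finNzRing_gt1. Qed.

Lemma expf_card_pred (x : F) : x != 0 -> x ^+ #|F|.-1 = 1.
Proof.
move=> xnz; apply: (mulfI xnz); rewrite -exprS prednK ?expf_card ?mulr1 //.
by have := card_finField_gt1; lia.
Qed.

Lemma finField_prim_root : exists alpha : F, (#|F|.-1).-primitive_root alpha.
Proof.
have /hasP [alpha _ ?] : has (#|F|.-1).-primitive_root (enum (predC1 (0 : F))).
  apply: has_prim_root; rewrite ?enum_uniq -?cardE ?cardC1 //.
  - by have := card_finField_gt1; lia.
  by apply/allP => x; rewrite mem_enum unity_rootE => /expf_card_pred ->.
by exists alpha.
Qed.

Section PrimitiveRoot.
Variable alpha : F.
Hypothesis prim : (#|F|.-1).-primitive_root alpha.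

Lemma prim_root_neq0 : alpha != 0.
Proof. by rewrite (prim_root_eq0 prim) -lt0n; have := card_finField_gt1; lia. Qed.

Lemma prim_root_logP (x : F) : x != 0 -> exists i, x = alpha ^+ i.
Proof. by move=> /expf_card_pred /(prim_rootP prim) [i ->]; exists i. Qed.

Lemma nzsq_prim_rootX i : nzsq (alpha ^+ i) = odd #|F|.-1 || ~~ odd i.
Proof.
rewrite /nzsq expf_eq0 (negbTE prim_root_neq0) andbF /=.
have [n_odd|n_even] /= := boolP (odd #|F|.-1).
  apply/existsP; exists (alpha ^+ (i * (#|F|.-1).+1./2)); apply/eqP.
  rewrite -exprM -mulnA (_ : _ * 2 = (#|F|.-1).+1)%N; last by move: n_odd; lia.
  by rewrite mulnS exprD mulnC exprM (prim_expr_order prim) expr1n mulr1.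
apply/existsP/idP => [[y /eqP hy]|i_even]; last first.
  by exists (alpha ^+ i./2); rewrite -exprM; apply/eqP; congr (_ ^+ _); lia.
have [|j hj] := prim_root_logP (x := y).
  apply/eqP => y0; move: hy; rewrite y0 expr0n /= => /esym/eqP.
  by rewrite expf_eq0 (negbTE prim_root_neq0) andbF.
move: hy; rewrite hj -exprM => /eqP; rewrite (eq_prim_root_expr prim) => /eqP.
move/(congr1 (modn^~ 2)); rewrite /= !modn_dvdm ?dvdn2 // modnMl modn2.
by case: (odd i).
Qed.

Lemma chi_prim_rootX i : chi (alpha ^+ i) = chi alpha ^+ i.
Proof.
have := nzsq_prim_rootX 1; rewrite expr1 /chi => ->; rewrite nzsq_prim_rootX /=.
by case: (odd _); rewrite ?expr1n // -signr_odd; case: (odd i).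
Qed.

Lemma chi_prim_root : odd #|F| -> chi alpha = -1.
Proof.
move=> oddF; rewrite /chi -[alpha]expr1 nzsq_prim_rootX orbF.
by have -> : odd #|F|.-1 = false by move: oddF card_finField_gt1; lia.
Qed.

End PrimitiveRoot.

Lemma chiM (x y : F) : x != 0 -> y != 0 -> chi (x * y) = chi x * chi y.
Proof.
have [alpha prim] := finField_prim_root.
move=> /(prim_root_logP prim) [i ->] /(prim_root_logP prim) [j ->].
by rewrite -exprD !(chi_prim_rootX prim) exprD.
Qed.

Lemma chi_nzsqMl (s x : F) : nzsq s -> chi (s * x) = chi x.
Proof.
move=> hs; have [->|xnz] := eqVneq x 0; first by rewrite mulr0.
by rewrite chiM ?(nzsq_neq0 hs) // [chi s]/chi hs mul1r.
Qed.

Lemma chiV (x : F) : chi x^-1 = chi x.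
Proof.
have [->|xnz] := eqVneq x 0; first by rewrite invr0.
have -> : x^-1 = x^-1 ^+ 2 * x by rewrite expr2 -mulrA mulVf ?mulr1.
by rewrite chi_nzsqMl // nzsq_sqr ?invr_eq0.
Qed.

Lemma chi1 : chi (1 : F) = 1.
Proof. by rewrite /chi nzsq1. Qed.

Lemma chi_pm1 (x : F) : (chi x == 1) || (chi x == -1).
Proof. by rewrite /chi; case: nzsq; rewrite eqxx ?orbT. Qed.

Lemma chi_sqr (x : F) : chi x * chi x = 1.
Proof. by rewrite /chi; case: nzsq; rewrite ?mulr1 ?mulrNN ?mulr1. Qed.

Lemma nzsq_chi (x : F) : nzsq x = (chi x == 1).
Proof. by rewrite /chi; case: nzsq => //=; rewrite -subr_eq0 opprK (_ : 1 + 1 = 2%:R) ?pnatr_eq0. Qed.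

Lemma nzsqN1 : (#|F| %% 4 = 1)%N -> nzsq (-1 : F).
Proof.
move=> card_mod4; have [alpha prim] := finField_prim_root.
rewrite -(@prim_expr_half _ (#|F|.-1./2) alpha); last 2 first.
- by move: card_mod4 card_finField_gt1; lia.
- by rewrite (_ : _.*2 = #|F|.-1) //; move: card_mod4; lia.
by rewrite nzsq_prim_rootX; move: card_mod4; lia.
Qed.

End QuadraticCharacter.

(** * Ordered triples of points *)

Definition map3 (T U : Type) (f : T -> U) (t : T * T * T) : U * U * U := (f t.1.1, f t.1.2, f t.2).
Definition triple_uniq (T : eqType) (t : T * T * T) :=
  [&& t.1.1 != t.1.2, t.1.2 != t.2 & t.2 != t.1.1].
Definition triple_set (T : finType) (t : T * T * T) : {set T} := [set t.1.1; t.1.2; t.2].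

Lemma map3_inj (T U : Type) (f : T -> U) : injective f -> injective (map3 f).
Proof. by move=> f_inj [[a b] c] [[a' b'] c'] [/f_inj -> /f_inj -> /f_inj ->]. Qed.

Lemma triple_uniq_map3 (T U : eqType) (f : T -> U) (t : T * T * T) :
  injective f -> triple_uniq (map3 f t) = triple_uniq t.
Proof. by move=> f_inj; rewrite /triple_uniq /= !(inj_eq f_inj). Qed.

Section FiniteTriples.
Variables T U : finType.
Implicit Types (t : T * T * T) (A : {set T}).

Lemma triple_set_map3 (f : T -> U) t : triple_set (map3 f t) = f @: triple_set t.
Proof. by rewrite /triple_set /= ?imsetU1 ?imsetU !imset_set1. Qed.

Lemma card_triple_set t : triple_uniq t -> #|triple_set t| = 3%N.
Proof.
case/and3P => h1 h2 h3.
have -> : triple_set t = t.1.1 |: (t.1.2 |: [set t.2]) by apply/setP => x; rewrite !inE orbA.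
by rewrite !cardsU1 cards1 !inE negb_or h1 h2 eq_sym h3.
Qed.

Lemma card3_triple_set A : #|A| = 3%N -> exists2 t, triple_uniq t & A = triple_set t.
Proof.
move=> A3; have := enum_uniq A; have := cardE A; rewrite A3.
case: (enum A) (set_enum A) => [|a [|b [|c [|]]]] // <- _.
rewrite /= !inE !andbT negb_or => /andP [/andP [hab hac] hbc].
exists (a, b, c); first by rewrite /triple_uniq /= hab hbc eq_sym hac.
by apply/setP => x; rewrite !inE /= orbA.
Qed.

Lemma triple_set_sub_imset (f : U -> T) t :
  triple_set t \subset f @: setT -> exists u, t = map3 f u.
Proof.
case: t => [[a b] c] /subsetP sub.
have /imsetP [x _ ->] : a \in f @: setT by apply: sub; rewrite !inE eqxx.
have /imsetP [y _ ->] : b \in f @: setT by apply: sub; rewrite !inE eqxx orbT.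
have /imsetP [z _ ->] : c \in f @: setT by apply: sub; rewrite !inE eqxx orbT.
by exists (x, y, z).
Qed.

End FiniteTriples.

Notation triple F := (option F * option F * option F)%type.

Notation triple_map m := (map3 (psl_map m)).

Section Triples.
Variable F : finFieldType.
Implicit Types (t : triple F) (m : F * F * F * F).

Definition bracket3 t : F := bracket t.1.1 t.1.2 * bracket t.1.2 t.2 * bracket t.2 t.1.1.
Definition triple_class t : int := chi (bracket3 t).
Definition dilation (r : F) : F * F * F * F := (r, 0, 0, 1).

Lemma mdet_dilation r : mdet (dilation r) = r.
Proof. by rewrite /= mulr1 mulr0 subr0. Qed.

Lemma bracket3_neq0 t : triple_uniq t -> bracket3 t != 0.
Proof. by case/and3P => h1 h2 h3; rewrite !mulf_eq0 !bracket_eq0 (negbTE h1) (negbTE h2) (negbTE h3). Qed.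

Lemma bracket3_map m t : mdet m != 0 -> bracket3 (triple_map m t) =
  (psl_scale m t.1.1 * psl_scale m t.1.2 * psl_scale m t.2 * mdet m) ^+ 2 * (mdet m * bracket3 t).
Proof. by move=> hm; rewrite /bracket3 !bracket_map //; ring. Qed.

Lemma triple_class_mapZ m t : mdet m != 0 -> triple_class (triple_map m t) = chi (mdet m * bracket3 t).
Proof. by move=> hm; rewrite /triple_class bracket3_map // chi_nzsqMl // nzsq_sqr // !mulf_neq0 ?psl_scale_neq0. Qed.

Lemma triple_class_map m t : nzsq (mdet m) -> triple_class (triple_map m t) = triple_class t.
Proof. by move=> hm; rewrite triple_class_mapZ ?nzsq_neq0 // chi_nzsqMl. Qed.

Lemma triple_class_dilation r t : r != 0 -> triple_uniq t ->
  triple_class (triple_map (dilation r) t) = chi r * triple_class t.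
Proof. by move=> rnz ht; rewrite triple_class_mapZ mdet_dilation // chiM ?bracket3_neq0. Qed.

Lemma triple_map_mul m n t : mdet n != 0 -> triple_map m (triple_map n t) = triple_map (mmul m n) t.
Proof. by move=> hn; rewrite /map3 /= !psl_map_mul. Qed.

Lemma triple_map_inj m : mdet m != 0 -> injective (triple_map m).
Proof. by move/psl_map_inj/map3_inj. Qed.

Lemma triple_uniq_map m t : mdet m != 0 -> triple_uniq (triple_map m t) = triple_uniq t.
Proof. by move/psl_map_inj/triple_uniq_map3. Qed.

Lemma triple_map_adjK m : mdet m != 0 -> cancel (triple_map m) (triple_map (madj m)).
Proof. by move=> hm [[a b] c]; rewrite /map3 /= !psl_map_adjK. Qed.

Definition std_triple (x : F) : triple F := (None, Some 0, Some x).

Lemma triple_uniq_std x : triple_uniq (std_triple x) = (x != 0).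
Proof. by rewrite /triple_uniq /= andbT eq_sym. Qed.

Lemma triple_class_std x : triple_class (std_triple x) = chi x.
Proof. by rewrite /triple_class /bracket3 /bracket /=; congr chi; ring. Qed.

Definition std_mx t : F * F * F * F :=
  let s := bracket t.1.2 t.1.1 in let P := hcoord t.1.1 in let Q := hcoord t.1.2 in
  (s * Q.2, - (s * Q.1), P.2, - P.1).
Definition std_param t : F := bracket t.1.2 t.1.1 * bracket t.2 t.1.2 / bracket t.2 t.1.1.

Lemma mact_std_mx t X :
  mact (std_mx t) (hcoord X) = (bracket t.1.2 t.1.1 * bracket X t.1.2, bracket X t.1.1).
Proof. rewrite /std_mx /bracket /=; congr pair; ring. Qed.

Lemma mdet_std_mx t : mdet (std_mx t) = bracket t.1.2 t.1.1 ^+ 2.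
Proof. rewrite /std_mx /bracket /=; ring. Qed.

Lemma triple_map_std_mx t : triple_uniq t ->
  triple_map (std_mx t) t = std_triple (std_param t).
Proof.
case/and3P => h1 h2 h3.
rewrite /map3 !psl_mapE !mact_std_mx /hpoint /= !bracket_eq0 eqxx.
have /eqP -> : bracket t.1.2 t.1.2 == 0 by rewrite bracket_eq0.
by rewrite eq_sym (negbTE h1) (negbTE h3) mulr0 mul0r.
Qed.

Lemma std_param_neq0 t : triple_uniq t -> std_param t != 0.
Proof.
case/and3P => h1 h2 h3; rewrite /std_param !mulf_eq0 invr_eq0 !bracket_eq0.
by rewrite eq_sym (negbTE h1) eq_sym (negbTE h2) (negbTE h3).
Qed.

Lemma chi_std_param t : triple_uniq t -> chi (std_param t) = triple_class t.
Proof.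
move=> ht; have h3 : bracket t.2 t.1.1 != 0 by rewrite bracket_eq0; case/and3P: ht.
have -> : std_param t = (bracket t.2 t.1.1)^-1 ^+ 2 * bracket3 t.
  by rewrite /std_param /bracket3 (bracketC t.1.2 t.1.1) (bracketC t.2 t.1.2); field.
by rewrite chi_nzsqMl // nzsq_sqr // invr_eq0.
Qed.

Lemma triple_map_dilation r x :
  triple_map (dilation r) (std_triple x) = std_triple (r * x).
Proof.
by rewrite /map3 !psl_mapE /hpoint /= !mulr0 !mul0r !addr0 !mulr1 add0r eqxx oner_eq0 !divr1.
Qed.

Lemma triple_class_transitive t t' : triple_uniq t -> triple_uniq t' ->
  triple_class t = triple_class t' -> exists2 m, nzsq (mdet m) & triple_map m t = t'.
Proof.
(* Both triples are normalised to (oo, 0, x); the two values of x differ by a square factor. *)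
move=> ht ht' hc.
have std_sq u : triple_uniq u -> nzsq (mdet (std_mx u)).
  by case/and3P=> hu _ _; rewrite mdet_std_mx nzsq_sqr // bracket_eq0 eq_sym.
set r := std_param t' / std_param t.
have r_sq : nzsq r.
  rewrite nzsq_chi /r chiM ?invr_eq0 ?std_param_neq0 // chiV !chi_std_param // hc.
  by rewrite chi_sqr.
exists (mmul (madj (std_mx t')) (mmul (dilation r) (std_mx t))).
  by rewrite !mdet_mul mdet_adj mdet_dilation (nzsqM (std_sq _ ht')) ?(nzsqM r_sq) ?std_sq.
have std_neq0 := nzsq_neq0 (std_sq _ ht).
rewrite -triple_map_mul; last by rewrite mdet_mul mdet_dilation mulf_neq0 ?(nzsq_neq0 r_sq).
rewrite -triple_map_mul // triple_map_std_mx // triple_map_dilation divfK ?std_param_neq0 //.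
by rewrite -(triple_map_std_mx ht') triple_map_adjK ?nzsq_neq0 ?std_sq.
Qed.

End Triples.

(** * Orbits of PSL(2,q) that are 3-designs *)

Lemma card_sep_sum (T : finType) (A : {set T}) (P : pred T) :
  #|[set x in A | P x]| = (\sum_(x in A) P x)%N.
Proof.
rewrite -sum1_card big_mkcond [RHS]big_mkcond /=; apply: eq_bigr => x _.
by rewrite !inE; case: (x \in A); case: (P x).
Qed.

Section OrbitDesign.
Variables (F : finFieldType) (B : {set option F}).
Implicit Types (t : triple F) (m : F * F * F * F) (X T : {set option F}).

Definition orbit_is_3design : Prop :=
  exists lam : nat, (0 < lam)%N /\
    forall T, #|T| = 3%N -> #|[set X in psl_orbit B | T \subset X]| = lam.

Definition blocks_through T := #|[set X in psl_orbit B | T \subset X]|.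
Definition class_triples (e : int) := [set t : triple F | triple_uniq t && (triple_class t == e)].
Definition class_triples_in (e : int) X := #|[set t in class_triples e | triple_set t \subset X]|.

Lemma psl_orbit_refl : B \in psl_orbit B.
Proof.
rewrite inE; apply/existsP; exists (1, 0, 0, 1); rewrite psl_coeffE /= mulr1 mulr0 subr0 nzsq1.
apply/eqP; rewrite -[LHS]imset_id; apply: eq_imset => -[x|] /=; rewrite ?eqxx //.
by rewrite mul0r add0r oner_eq0 mul1r addr0 divr1.
Qed.

Lemma psl_orbit_map m X : nzsq (mdet m) -> X \in psl_orbit B -> psl_map m @: X \in psl_orbit B.
Proof.
move=> hm; rewrite !inE => /existsP [n /andP [+ /eqP ->]]; rewrite psl_coeffE => hn.
apply/existsP; exists (mmul m n); rewrite psl_coeffE mdet_mul nzsqM //=.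
apply/eqP; rewrite -imset_comp; apply: eq_imset => P /=.
by rewrite psl_map_mul ?nzsq_neq0.
Qed.

Lemma imset_psl_map_adjK m X : mdet m != 0 -> psl_map (madj m) @: (psl_map m @: X) = X.
Proof. by move=> hm; rewrite -imset_comp (eq_imset _ (psl_map_adjK hm)) imset_id. Qed.

Lemma blocks_through_map_le m T : nzsq (mdet m) ->
  (blocks_through T <= blocks_through (psl_map m @: T))%N.
Proof.
move=> hm; rewrite /blocks_through.
rewrite -(card_imset _ (imset_inj (psl_map_inj (nzsq_neq0 hm)))).
apply: subset_leq_card; apply/subsetP => _ /imsetP [X + ->].
by rewrite in_set => /andP [hX hTX]; rewrite in_set psl_orbit_map // imsetS.
Qed.

Lemma blocks_through_map m T : nzsq (mdet m) -> blocks_through (psl_map m @: T) = blocks_through T.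
Proof.
move=> hm; apply/eqP; rewrite eqn_leq blocks_through_map_le // andbT.
have := @blocks_through_map_le (madj m) (psl_map m @: T).
by rewrite imset_psl_map_adjK ?nzsq_neq0 // mdet_adj; apply.
Qed.

Lemma blocks_through_class e t t' : t \in class_triples e -> t' \in class_triples e ->
  blocks_through (triple_set t) = blocks_through (triple_set t').
Proof.
rewrite !inE => /andP [ht /eqP hc] /andP [ht' /eqP hc'].
have [m hm <-] := triple_class_transitive ht ht' (etrans hc (esym hc')).
by rewrite triple_set_map3 blocks_through_map.
Qed.

Lemma class_triples_in_map_le e m X : nzsq (mdet m) ->
  (class_triples_in e X <= class_triples_in e (psl_map m @: X))%N.
Proof.
move=> hm; have hm0 := nzsq_neq0 hm; rewrite /class_triples_in.
rewrite -(card_imset _ (triple_map_inj hm0)).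
apply: subset_leq_card; apply/subsetP => _ /imsetP [t + ->].
rewrite !inE => /andP [/andP [ht hc] hs].
by rewrite triple_uniq_map // triple_class_map // ht hc triple_set_map3 imsetS.
Qed.

Lemma class_triples_in_orbit e X : X \in psl_orbit B -> class_triples_in e X = class_triples_in e B.
Proof.
rewrite inE => /existsP [m /andP [+ /eqP ->]]; rewrite psl_coeffE => hm.
apply/eqP; rewrite eqn_leq andbC class_triples_in_map_le //.
have := @class_triples_in_map_le e (madj m) (psl_map m @: B).
by rewrite imset_psl_map_adjK ?nzsq_neq0 // mdet_adj; apply.
Qed.

Lemma double_count e t0 : t0 \in class_triples e ->
  (#|class_triples e| * blocks_through (triple_set t0) = #|psl_orbit B| * class_triples_in e B)%N.
Proof.
move=> ht0; rewrite -!sum_nat_const.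
rewrite -(eq_bigr _ (fun t ht => blocks_through_class ht ht0)).
rewrite -(eq_bigr _ (fun X hX => class_triples_in_orbit e hX)).
rewrite /blocks_through /class_triples_in.
under eq_bigr do rewrite card_sep_sum.
under [RHS]eq_bigr do rewrite card_sep_sum.
exact: exchange_big.
Qed.

Lemma std_triple_in_class x : x != 0 -> std_triple x \in class_triples (chi x).
Proof. by move=> xnz; rewrite inE triple_uniq_std triple_class_std xnz eqxx. Qed.

Lemma card_class_triples_le e : odd #|F| -> (#|class_triples e| <= #|class_triples (- e)|)%N.
Proof.
move=> oddF; have [alpha prim] := finField_prim_root F.
have a0 := prim_root_neq0 prim.
have d0 : mdet (dilation alpha) != 0 by rewrite mdet_dilation.
rewrite -(card_imset _ (triple_map_inj d0)).
apply: subset_leq_card; apply/subsetP => _ /imsetP [t + ->]; rewrite !inE => /andP [ht /eqP hc].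
by rewrite triple_uniq_map // ht triple_class_dilation // chi_prim_root // hc mulN1r eqxx.
Qed.

Lemma card_class_triplesN : odd #|F| -> #|class_triples 1| = #|class_triples (-1)|.
Proof.
move=> oddF; apply/eqP; rewrite eqn_leq card_class_triples_le //.
by rewrite -{2}(opprK 1) card_class_triples_le.
Qed.

Theorem orbit_is_3designP : odd #|F| ->
  orbit_is_3design <-> class_triples_in 1 B = class_triples_in (-1) B /\ (0 < class_triples_in 1 B)%N.
Proof.
move=> oddF; have [alpha prim] := finField_prim_root F.
have a0 := prim_root_neq0 prim.
have tp := std_triple_in_class (oner_neq0 F); rewrite chi1 in tp.
have tm := std_triple_in_class a0; rewrite chi_prim_root // in tm.
have cnt_p := double_count tp; have cnt_m := double_count tm.
rewrite -card_class_triplesN // in cnt_m.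
have cls_gt0 : (0 < #|class_triples 1|)%N by apply/card_gt0P; exists (std_triple 1).
have orb_gt0 : (0 < #|psl_orbit B|)%N by apply/card_gt0P; exists B; apply: psl_orbit_refl.
have card_std (x : F) : x != 0 -> #|triple_set (std_triple x)| = 3%N.
  by move=> xnz; rewrite card_triple_set ?triple_uniq_std.
split=> [[lam [lam_gt0 hlam]]|[hc hpos]].
  rewrite /blocks_through hlam ?card_std ?oner_neq0 // in cnt_p.
  rewrite /blocks_through hlam ?card_std // in cnt_m.
  split; first by apply/eqP; rewrite -(eqn_pmul2l orb_gt0) -cnt_p -cnt_m.
  by rewrite -(ltn_pmul2l orb_gt0) muln0 -cnt_p muln_gt0 cls_gt0.
exists (blocks_through (triple_set (std_triple 1))); split.
  by rewrite -(ltn_pmul2l cls_gt0) muln0 cnt_p muln_gt0 orb_gt0.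
move=> _ /card3_triple_set [t ht ->]; rewrite -/(blocks_through _).
have /orP [/eqP hc1|/eqP hc1] := chi_pm1 (bracket3 t); rewrite -/(triple_class t) in hc1.
  by apply: blocks_through_class tp; rewrite inE ht hc1.
rewrite (@blocks_through_class (-1) t _ _ tm); last by rewrite inE ht hc1.
by apply/eqP; rewrite -(eqn_pmul2l cls_gt0) cnt_m cnt_p hc.
Qed.

End OrbitDesign.

(** * Blocks generated by a cyclic subgroup *)

Section CyclicDifferences.
Variable k : nat.
Implicit Types (f g : nat -> int) (u : 'I_k * 'I_k * 'I_k).

Definition cyc_dist (a b : nat) : nat := (b + k - a) %% k.
Definition cyc_sign f u : int :=
  f (cyc_dist u.1.1 u.1.2) * f (cyc_dist u.1.2 u.2) * f (cyc_dist u.2 u.1.1).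
Definition cyc_count f (e : int) := #|[set u | triple_uniq u && (cyc_sign f u == e)]|.
Definition balanced f : Prop := cyc_count f 1 = cyc_count f (-1) /\ (0 < cyc_count f 1)%N.

Lemma cyc_dist_range (a b : nat) : (a < k)%N -> (b < k)%N -> a != b -> (0 < cyc_dist a b < k)%N.
Proof.
move=> ha hb hab; rewrite /cyc_dist.
have [le_ab|lt_ba] := leqP a b; last by rewrite modn_small; lia.
by rewrite (_ : b + k - a = b - a + k)%N ?modnDr ?modn_small; lia.
Qed.

Lemma balanced_ext f g : (forall j, (0 < j < k)%N -> f j = g j) -> balanced f <-> balanced g.
Proof.
move=> fg; suff cnt e : cyc_count f e = cyc_count g e by rewrite /balanced !cnt.
apply: eq_card => -[[a b] c]; rewrite !inE; case/boolP: (triple_uniq _) => //= /and3P [/= hab hbc hca].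
by rewrite /cyc_sign /= !fg // cyc_dist_range // eq_sym.
Qed.

End CyclicDifferences.

Lemma eq_prim_root_expr_lt (R : idomainType) (n : nat) (z : R) (a b : nat) :
  n.-primitive_root z -> (a < n)%N -> (b < n)%N -> (z ^+ a == z ^+ b) = (a == b).
Proof. by move=> prim ha hb; rewrite (eq_prim_root_expr prim) !modn_small. Qed.

Definition cyc_chi (F : finFieldType) (beta : F) (j : nat) : int := chi (1 - beta ^+ j).

Section SubgroupBlock.
Variables (F : finFieldType) (k : nat) (beta : F).
Hypothesis beta_prim : k.-primitive_root beta.
Hypothesis beta_sq : nzsq beta.

Lemma chi_betaXB (a b : nat) : (a < k)%N -> (b < k)%N ->
  chi (beta ^+ a - beta ^+ b) = cyc_chi beta (cyc_dist k a b).
Proof.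
move=> ha hb; have -> : beta ^+ a - beta ^+ b = beta ^+ a * (1 - beta ^+ cyc_dist k a b).
  rewrite mulrBr mulr1 -exprD -(prim_expr_mod beta_prim (a + _)) /cyc_dist modnDmr.
  by rewrite (_ : a + _ = b + k)%N ?modnDr ?prim_expr_mod //; lia.
by rewrite chi_nzsqMl ?nzsqX.
Qed.

Definition beta_pt (i : 'I_k) : option F := Some (beta ^+ i).

Lemma beta_pt_inj : injective beta_pt.
Proof. by move=> i j [] /eqP; rewrite (eq_prim_root_expr_lt beta_prim) // => /eqP /val_inj. Qed.

Lemma subgroup_kE : subgroup_k F k = beta_pt @: setT.
Proof.
apply/setP => P; apply/imsetP/imsetP => -[x hx ->].
  by move: hx; rewrite inE => /eqP /(prim_rootP beta_prim) [i ->]; exists i.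
by exists (beta ^+ x); rewrite // inE exprAC (prim_expr_order beta_prim) expr1n.
Qed.

Lemma triple_class_beta u : triple_uniq u -> triple_class (map3 beta_pt u) = cyc_sign (cyc_chi beta) u.
Proof.
case: u => [[a b] c] /and3P [/= hab hbc hca].
have diff_neq0 (x y : 'I_k) : x != y -> beta ^+ x - beta ^+ y != 0.
  by rewrite subr_eq0 (eq_prim_root_expr_lt beta_prim).
rewrite /triple_class /bracket3 /bracket /= !mulr1 !mul1r.
by rewrite !chiM ?mulf_neq0 ?diff_neq0 // !chi_betaXB.
Qed.

Lemma class_triples_in_subgroup e :
  class_triples_in e (subgroup_k F k) = cyc_count k (cyc_chi beta) e.
Proof.
rewrite /class_triples_in /cyc_count -(card_imset _ (map3_inj beta_pt_inj)) subgroup_kE.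
apply: eq_card => t; apply/idP/imsetP.
  rewrite !inE => /andP [/andP [ht /eqP hc] /triple_set_sub_imset [u tu]].
  move: ht hc; rewrite tu (triple_uniq_map3 _ beta_pt_inj) => hu hc; exists u => //.
  by rewrite inE hu -triple_class_beta // hc eqxx.
case=> u; rewrite inE => /andP [hu /eqP hc] ->.
rewrite !inE (triple_uniq_map3 _ beta_pt_inj) // hu triple_class_beta // hc eqxx.
by rewrite triple_set_map3 imsetS ?subsetT.
Qed.

Lemma gives_3design_balanced : odd #|F| -> gives_3design F k <-> balanced k (cyc_chi beta).
Proof. by move=> oddF; rewrite /balanced -!class_triples_in_subgroup; apply: orbit_is_3designP. Qed.

End SubgroupBlock.

(** * Recovering the function j |-> chi(1 - beta^j) from few values *)

Definition sym_ext (s : seq int) (n j : nat) : int := nth 0 s (minn j (n - j)).-1.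

Lemma sym_ext_map (g : nat -> int) (n m j : nat) (r : seq int) :
  (forall i, (0 < i < n)%N -> g (n - i)%N = g i) -> (n <= m.*2.+1)%N -> (0 < j < n)%N ->
  sym_ext ([seq g i | i <- iota 1 m] ++ r) n j = g j.
Proof.
move=> g_sym n_le j_range; rewrite /sym_ext nth_cat size_map size_iota.
have -> : ((minn j (n - j)).-1 < m)%N by lia.
rewrite (nth_map 0%N) ?size_iota ?nth_iota; try lia.
have [le_j|lt_j] := leqP j (n - j).
  by rewrite (_ : 1 + _ = j)%N //; lia.
by rewrite (_ : 1 + _ = n - j)%N ?g_sym //; lia.
Qed.

Lemma modn_lt_double (x k : nat) : (x < k.*2)%N -> (x %% k = if x < k then x else x - k)%N.
Proof.
case: ifP => [lt_xk _|ge_xk lt_x]; first exact: modn_small.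
by rewrite -[in LHS](@subnK k x) ?modnDr ?modn_small; lia.
Qed.

Lemma half_shift_range (k j : nat) : (k %% 4 = 2)%N -> odd j -> j != k./2 -> (0 < j < k)%N ->
  let j2 := ((2 * j) %% k)%N in let jh := ((j + k./2) %% k)%N in
  [/\ (0 < j2 < k)%N, ~~ odd j2, (0 < jh < k)%N & ~~ odd jh].
Proof.
move=> k_mod4 j_odd j_h j_range /=.
rewrite !modn_lt_double; try lia.
by do 2 case: ifP => ?; split; lia.
Qed.

(* [s] lists f 2, f 4, ..., f (k/2 - 1), then f (k/2); an odd [j <> k/2] is recovered from
   f j = f (2 j) f (j + k/2). *)
Definition even_ext (k : nat) (s : seq int) (j : nat) : int :=
  let h := k./2 in let g i := sym_ext s h i./2 in
  if j == h then nth 0 s ((k - 2) %/ 4)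
  else if odd j then g ((2 * j) %% k)%N * g ((j + h) %% k)%N else g j.

Section CyclotomicSymmetries.
Variables (F : finFieldType) (k : nat) (beta : F).
Hypothesis beta_prim : k.-primitive_root beta.
Hypothesis beta_sq : nzsq beta.
Hypothesis N1_sq : nzsq (-1 : F).

Lemma cyc_chi_neq0 j : (0 < j < k)%N -> 1 - beta ^+ j != 0.
Proof. by move=> j_range; rewrite subr_eq0 eq_sym -(expr0 beta) (eq_prim_root_expr_lt beta_prim) //; lia. Qed.

Lemma cyc_chi_sym j : (0 < j < k)%N -> cyc_chi beta (k - j)%N = cyc_chi beta j.
Proof.
move=> j_range; rewrite /cyc_chi.
have -> : 1 - beta ^+ (k - j) = (-1 * beta ^+ (k - j)) * (1 - beta ^+ j).
  rewrite mulN1r mulNr mulrBr mulr1 -exprD subnK ?(prim_expr_order beta_prim); [ring | lia].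
by rewrite chi_nzsqMl // nzsqM ?nzsqX.
Qed.

Lemma cyc_chi_odd_ext : odd k -> forall j, (0 < j < k)%N ->
  cyc_chi beta j = sym_ext [seq cyc_chi beta i | i <- iota 1 k.-1./2] k j.
Proof.
move=> k_odd j j_range; rewrite -[X in sym_ext X]cats0 sym_ext_map //; first exact: cyc_chi_sym.
by lia.
Qed.

Section EvenOrder.
Hypothesis k_mod4 : (k %% 4 = 2)%N.

Let h := k./2.
Let s := [seq cyc_chi beta (2 * i)%N | i <- iota 1 ((k - 2) %/ 4)] ++ [:: chi (2 : F)].

Lemma cyc_chi_even j : ~~ odd j -> (0 < j < k)%N -> cyc_chi beta j = sym_ext s h j./2.
Proof.
move=> j_even j_range; rewrite sym_ext_map.
- by rewrite (_ : 2 * j./2 = j)%N //; lia.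
- move=> i; rewrite /h => i_range; have i2 : (0 < 2 * i < k)%N by lia.
  by rewrite -(cyc_chi_sym i2) (_ : 2 * (k./2 - i) = k - 2 * i)%N //; lia.
- by rewrite /h; lia.
by rewrite /h; lia.
Qed.

Lemma betaX_half : beta ^+ h = -1.
Proof.
have h_gt0 : (0 < h)%N by rewrite /h; lia.
have h2 : h.*2 = k by rewrite /h; lia.
by rewrite prim_expr_half // h2.
Qed.

Lemma cyc_chi_half : cyc_chi beta h = chi (2 : F).
Proof. by rewrite /cyc_chi betaX_half opprK. Qed.

Lemma cyc_chi_odd j : odd j -> j != h -> (0 < j < k)%N ->
  cyc_chi beta j = cyc_chi beta ((2 * j) %% k) * cyc_chi beta ((j + h) %% k).
Proof.
move=> j_odd j_h j_range.
have [_ _ jh_range _] := half_shift_range k_mod4 j_odd j_h j_range.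
have := cyc_chi_neq0 jh_range; have := cyc_chi_neq0 j_range.
rewrite /cyc_chi !(prim_expr_mod beta_prim) exprD betaX_half mulrN1 mulnC exprM => j_neq0 jh_neq0.
rewrite (_ : 1 - _ ^+ 2 = (1 - beta ^+ j) * (1 - - beta ^+ j)); last by ring.
by rewrite chiM // mulrAC -mulrA chi_sqr mulr1.
Qed.

Lemma cyc_chi_even_ext j : (0 < j < k)%N -> cyc_chi beta j = even_ext k s j.
Proof.
move=> j_range; rewrite /even_ext -/h.
have [->|j_h] := eqVneq j h.
  by rewrite nth_cat size_map size_iota ltnn subnn cyc_chi_half.
case: ifP => [j_odd|j_even]; last by rewrite cyc_chi_even ?j_even.
have [? ? ? ?] := half_shift_range k_mod4 j_odd j_h j_range.
by rewrite cyc_chi_odd // -!cyc_chi_even.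
Qed.

End EvenOrder.
End CyclotomicSymmetries.

Definition pm1_seq (m : nat) (s : seq int) :=
  (size s == m) && all (fun x => (x == 1) || (x == -1)) s.

Definition design_seqs (k m : nat) (ext : seq int -> nat -> int) (s : seq int) : Prop :=
  pm1_seq m s /\ balanced k (ext s).

Lemma pm1_seqs_design_seqs k m ext : pm1_seqs m (design_seqs k m ext).
Proof. by move=> s [/andP [/eqP]]. Qed.

Lemma gives_3design_design_seqs (F : finFieldType) (k m : nat) (beta : F) ext s :
  odd #|F| -> k.-primitive_root beta -> nzsq beta -> pm1_seq m s ->
  (forall j, (0 < j < k)%N -> cyc_chi beta j = ext s j) ->
  gives_3design F k <-> design_seqs k m ext s.
Proof.
move=> oddF prim sq pm1 ext_eq.
apply: (iff_trans (gives_3design_balanced prim sq oddF)).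
by apply: (iff_trans (balanced_ext ext_eq)); rewrite /design_seqs; tauto.
Qed.

Lemma all_pm1_chi (F : finFieldType) (I : eqType) (f : I -> F) (r : seq I) :
  all (fun x => (x == 1) || (x == -1)) [seq chi (f i) | i <- r].
Proof. by apply/allP => _ /mapP [i _ ->]; apply: chi_pm1. Qed.

Lemma subgroup_generator (F : finFieldType) (k : nat) (alpha : F) :
  (#|F| %% 4 = 1)%N -> (k %| #|F|.-1)%N -> ~~ odd (#|F|.-1 %/ k)%N ->
  (#|F|.-1).-primitive_root alpha ->
  let beta := alpha ^+ (#|F|.-1 %/ k) in
  [/\ odd #|F|, k.-primitive_root beta, nzsq beta & nzsq (-1 : F)].
Proof.
move=> q4 kdiv e_even prim; split; first by lia.
- exact: dvdn_prim_root.
- by rewrite (nzsq_prim_rootX prim) e_even orbT.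
exact: nzsqN1.
Qed.

Theorem proposition2p8 (k : nat) (hk : (0 < k)%N) :
  (odd k ->
    exists S : seq int -> Prop, pm1_seqs k.-1./2 S /\
      forall (F : finFieldType) (alpha : F),
        (#|F| %% 4 = 1)%N -> (k %| #|F|.-1)%N -> ~~ odd (#|F|.-1 %/ k)%N ->
        (#|F|.-1).-primitive_root alpha ->
        let beta := alpha ^+ (#|F|.-1 %/ k) in
        gives_3design F k <->
          S [seq chi (1 - beta ^+ i) | i <- iota 1 k.-1./2]) /\
  ((k %% 4 = 2)%N ->
    exists S : seq int -> Prop, pm1_seqs (k.+2 %/ 4) S /\
      forall (F : finFieldType) (alpha : F),
        (#|F| %% 4 = 1)%N -> (k %| #|F|.-1)%N -> ~~ odd (#|F|.-1 %/ k)%N ->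
        (#|F|.-1).-primitive_root alpha ->
        let beta := alpha ^+ (#|F|.-1 %/ k) in
        gives_3design F k <->
          S ([seq chi (1 - beta ^+ (2 * i)) | i <- iota 1 ((k - 2) %/ 4)]
             ++ [:: chi (2 : F)])).
Proof.
(* [hk] is implied by [k %| #|F|.-1]. *)
split=> [k_odd | k_mod4].
  exists (design_seqs k k.-1./2 (fun s => sym_ext s k)); split; first exact: pm1_seqs_design_seqs.
  move=> F alpha q4 kdiv e_even prim beta.
  have [oddF beta_prim beta_sq N1_sq] := subgroup_generator q4 kdiv e_even prim.
  apply: (gives_3design_design_seqs oddF beta_prim beta_sq); last exact: cyc_chi_odd_ext.
  by rewrite /pm1_seq size_map size_iota eqxx all_pm1_chi.
exists (design_seqs k (k.+2 %/ 4) (even_ext k)); split; first exact: pm1_seqs_design_seqs.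
move=> F alpha q4 kdiv e_even prim beta.
have [oddF beta_prim beta_sq N1_sq] := subgroup_generator q4 kdiv e_even prim.
apply: (gives_3design_design_seqs oddF beta_prim beta_sq); last exact: cyc_chi_even_ext.
rewrite /pm1_seq size_cat size_map size_iota all_cat all_pm1_chi /= chi_pm1 andbT.
by apply/eqP; lia.
Qed.
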